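(* The composite map $$(\pi_0^{\mathrm{N}}\mathcal{F}_2)(k)\xrightarrow{\pi_0^{\mathrm{N}}\mathrm{B\acute{e}z}_2}(\pi_0^{\mathrm{N}}\mathcal{S}_2)(k)\xrightarrow{\overline{q}_2\times\det}\mathrm{MW}^{\mathrm{s}}_2(k)\times_{k^\times/k^{\times2}}k^\times$$ is injective.
   Context: Let $k$ be a field. $\mathcal{F}_2(R)$ is the set of pairs $(A,B)$ of polynomials in $R[X]$, $A$ monic of degree 2, $\deg B<2$, $\mathrm{res}_{2,2}(A,B)\in R^\times$; $\mathcal{S}_2(R)$ the set of symmetric $2\times2$ matrices over $R$ with invertible determinant. For a functor $\mathcal{G}$ on $k$-algebras, $(\pi_0^{\mathrm{N}}\mathcal{G})(k)$ is the coequalizer of $\mathcal{G}(k[T])\rightrightarrows\mathcal{G}(k)$ (evaluation at $T=0,1$). $\mathrm{B\acute{e}z}_2(A,B)=[c_{p,q}]$ where $\frac{A(X)B(Y)-A(Y)B(X)}{X-Y}=\sum c_{p,q}X^{p-1}Y^{q-1}$. $\mathrm{MW}^{\mathrm{s}}_2(k)$ is the set of stable isomorphism classes of rank-2 non-degenerate symmetric bilinear forms over $k$; $\overline{q}_2$ sends the homotopy class of a matrix to the stable class of its form (well defined). The fibre product is over the discriminant (determinant mod squares) and $k^\times\to k^\times/k^{\times2}$. *)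

From HB Require Import structures.
From mathcomp Require Import all_boot all_order all_algebra.
From Stdlib Require Import Relations.
Set Implicit Arguments. Unset Strict Implicit. Unset Printing Implicit Defensive.
Import Order.TTheory GRing.Theory Num.Theory.
Local Open Scope ring_scope.

(* Sylvester matrix of (A,B) with formal degrees (2,2):
   rows 0,1 hold the coefficients a_2 a_1 a_0 of A (shifted),
   rows 2,3 hold the coefficients b_2 b_1 b_0 of B (shifted). *)
Definition sylv22 (R : nzRingType) (A B : {poly R}) : 'M[R]_4 :=
  \matrix_(i < 4, j < 4)
    let P := if (i < 2)%N then A else B in
    let r := if (i < 2)%N then (i : nat) else (i - 2)%N in
    if ((r <= j) && (j <= r + 2))%N then P`_(r + 2 - j) else 0.

Definition res22 (R : comNzRingType) (A B : {poly R}) : R := \det (sylv22 A B).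

Definition inF2 (R : comUnitRingType) (x : {poly R} * {poly R}) : Prop :=
  [/\ x.1 \is monic, size x.1 = 3%N, (size x.2 <= 2)%N
    & res22 x.1 x.2 \is a GRing.unit].

(* Bezoutian of (A,B) in degree 2: the matrix [c_{p,q}] with
   (A(X)B(Y) - A(Y)B(X))/(X-Y) = sum_{p,q} c_{p,q} X^(p-1) Y^(q-1).
   Writing A = a0 + a1 X + a2 X^2, B = b0 + b1 X + b2 X^2, this quotient is
   (a1 b0 - a0 b1) + (a2 b0 - a0 b2)(X + Y) + (a2 b1 - a1 b2) X Y.
   (0-indexed entries: (i,j) is the coefficient of X^i Y^j.) *)
Definition Bez2 (R : comNzRingType) (x : {poly R} * {poly R}) : 'M[R]_2 :=
  let a := x.1 in let b := x.2 in
  \matrix_(i < 2, j < 2)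
    if ((i : nat) == 0%N) && ((j : nat) == 0%N) then a`_1 * b`_0 - a`_0 * b`_1
    else if ((i : nat) == 1%N) && ((j : nat) == 1%N) then a`_2 * b`_1 - a`_1 * b`_2
    else a`_2 * b`_0 - a`_0 * b`_2.

Definition ev_pair (k : fieldType) (t : k) (h : {poly {poly k}} * {poly {poly k}})
  : {poly k} * {poly k} :=
  (map_poly (fun p : {poly k} => p.[t]) h.1, map_poly (fun p : {poly k} => p.[t]) h.2).

Definition naive_htpy (k : fieldType) (x y : {poly k} * {poly k}) : Prop :=
  exists h : {poly {poly k}} * {poly {poly k}},
    [/\ inF2 h, ev_pair 0 h = x & ev_pair 1 h = y].

(* the equivalence relation whose quotient is (pi_0^N F_2)(k) *)
Definition naive_equiv (k : fieldType) : relation ({poly k} * {poly k}) :=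
  clos_refl_sym_trans _ (@naive_htpy k).

Definition form_iso (k : fieldType) (n : nat) (M N : 'M[k]_n) : Prop :=
  exists P : 'M[k]_n, P \in unitmx /\ P^T *m M *m P = N.

Definition stably_iso (k : fieldType) (n : nat) (M N : 'M[k]_n) : Prop :=
  exists (m : nat) (G : 'M[k]_m), [/\ G^T = G, G \in unitmx &
    form_iso (block_mx M 0 0 G) (block_mx N 0 0 G)].

(* Write bezrep p q s for the element of F_2(k) whose Bezoutian is the symmetric
   matrix [[p, q], [q, s]]. Every x in F_2(k) is naively homotopic to the bezrep of
   its Bezoutian, and a polynomial family of symmetric matrices with constant
   non-zero determinant yields a naive homotopy between the bezreps of its ends.
   Elementary congruences are such families, so the class of bezrep S depends only
   on det S and on one non-zero value a represented by S: it is the class of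
   bezrep (diag a (det S / a)), and an isotropic S reaches every a.
   Stable isometry of M and N (M + G ~ N + G) forces u M u^T = v N v^T for some
   (u, v) <> 0, by a rank count on the vectors whose G-component is preserved by the
   isometry; no assumption on the characteristic of k is needed. *)

From mathcomp Require Import all_boot all_order all_algebra.
From mathcomp Require Import ring zify.
From Stdlib Require Import Relations.
Set Implicit Arguments. Unset Strict Implicit.
Import GRing.Theory.
Local Open Scope ring_scope.

Definition mkF2 (R : nzRingType) (a0 a1 b0 b1 : R) : {poly R} * {poly R} :=
  (('X + a1%:P) * 'X + a0%:P, b1%:P * 'X + b0%:P).

Lemma coef_quad (R : nzRingType) (a0 a1 : R) i :
  (('X + a1%:P) * 'X + a0%:P)`_i =
  if i == 0%N then a0 else if i == 1%N then a1 else if i == 2%N then 1 else 0.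
Proof.
rewrite coefD coefMX coefD coefX !coefC.
by case: i => [|[|[|i]]] /=; rewrite ?addr0 ?add0r.
Qed.

Lemma coef_lin (R : nzRingType) (b0 b1 : R) i :
  (b1%:P * 'X + b0%:P)`_i = if i == 0%N then b0 else if i == 1%N then b1 else 0.
Proof.
rewrite coefD coefMX !coefC.
by case: i => [|[|i]] /=; rewrite ?addr0 ?add0r.
Qed.

Lemma size_quad (R : nzRingType) (a0 a1 : R) : size (('X + a1%:P) * 'X + a0%:P) = 3%N.
Proof. by rewrite size_MXaddC size_XaddC -size_poly_eq0 size_XaddC. Qed.

Lemma size_lin (R : nzRingType) (b0 b1 : R) : (size (b1%:P * 'X + b0%:P)%R <= 2)%N.
Proof. by rewrite size_MXaddC; case: ifP => // _; rewrite size_polyC; case: (_ != 0). Qed.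

Lemma det_mx2 (R : comNzRingType) (A : 'M[R]_2) :
  \det A = A 0 0 * A 1 1 - A 0 1 * A 1 0.
Proof.
rewrite (expand_det_col _ 0) !big_ord_recr big_ord0 /= add0r /cofactor !det_mx11 !mxE /=.
rewrite (_ : widen_ord _ _ = 0 :> 'I_2); last by apply: val_inj.
rewrite (_ : lift (0 : 'I_2) 0 = 1 :> 'I_2); last by apply: val_inj.
rewrite (_ : lift (ord_max : 'I_2) 0 = 0 :> 'I_2); last by apply: val_inj.
rewrite (_ : (ord_max : 'I_2) = 1); last by apply: val_inj.
rewrite /= expr0 expr1 !mul1r; ring.
Qed.

Lemma res22_mkF2 (R : comNzRingType) (a0 a1 b0 b1 : R) :
  res22 (mkF2 a0 a1 b0 b1).1 (mkF2 a0 a1 b0 b1).2 =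
  b0 ^+ 2 - a1 * b0 * b1 + a0 * b1 ^+ 2.
Proof.
rewrite /res22 (expand_det_col _ 0) !big_ord_recr big_ord0 /= add0r.
rewrite /cofactor !mxE /= !coef_quad !coef_lin /= !mul0r !addr0 expr0 !mul1r.
rewrite (expand_det_col _ 0) !big_ord_recr big_ord0 /= add0r.
rewrite /cofactor !mxE /= !coef_quad !coef_lin /= !mul0r !addr0 !det_mx2 !mxE /=.
rewrite !coef_quad !coef_lin /= expr0 expr1; ring.
Qed.

Lemma inF2_mkF2 (R : comUnitRingType) (a0 a1 b0 b1 : R) :
  b0 ^+ 2 - a1 * b0 * b1 + a0 * b1 ^+ 2 \is a GRing.unit -> inF2 (mkF2 a0 a1 b0 b1).
Proof.
move=> res_unit; split=> /=; rewrite ?res22_mkF2 ?size_quad ?size_lin //.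
by apply/monicP; rewrite lead_coefE size_quad coef_quad.
Qed.

Lemma inF2_mkF2E (R : comUnitRingType) (x : {poly R} * {poly R}) :
  inF2 x -> exists a0 a1 b0 b1, x = mkF2 a0 a1 b0 b1.
Proof.
case: x => A B [/= /monicP lcA sA sB _]; exists A`_0, A`_1, B`_0, B`_1.
congr (_, _); apply/polyP => i.
- rewrite coef_quad; case: i => [|[|[|i]]] //=; first by rewrite -lcA lead_coefE sA.
  by rewrite nth_default // sA.
- by rewrite coef_lin; case: i => [|[|i]] //=; rewrite nth_default // (leq_trans sB).
Qed.

Definition symmx2 (R : nzRingType) (p q s : R) : 'M[R]_2 :=
  \matrix_(i < 2, j < 2)
    if ((i : nat) == 0%N) && ((j : nat) == 0%N) then p
    else if ((i : nat) == 1%N) && ((j : nat) == 1%N) then s else q.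

Lemma Bez2_mkF2 (R : comNzRingType) (a0 a1 b0 b1 : R) :
  Bez2 (mkF2 a0 a1 b0 b1) = symmx2 (a1 * b0 - a0 * b1) b0 b1.
Proof.
by apply/matrixP => i j; rewrite !mxE /= !coef_quad !coef_lin /= !mul1r !mulr0 !subr0.
Qed.

Definition sdet (R : comNzRingType) (p q s : R) := p * s - q ^+ 2.

Lemma det_symmx2 (R : comNzRingType) (p q s : R) : \det (symmx2 p q s) = sdet p q s.
Proof. by rewrite det_mx2 !mxE /= /sdet expr2. Qed.

Definition qval (R : comNzRingType) (p q s w1 w2 : R) :=
  p * w1 ^+ 2 + 2 * q * w1 * w2 + s * w2 ^+ 2.

Lemma form_symmx2 (R : comNzRingType) (p q s : R) (u : 'rV[R]_2) :
  (u *m symmx2 p q s *m u^T) 0 0 = qval p q s (u 0 0) (u 0 1).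
Proof.
rewrite !mxE !big_ord_recr !big_ord0 /= !add0r !mxE !big_ord_recr !big_ord0 /= !add0r !mxE /=.
rewrite (_ : (ord_max : 'I_2) = 1); last by apply: val_inj.
rewrite (_ : (widen_ord (leqnSn 1) ord_max : 'I_2) = 0); last by apply: val_inj.
rewrite /qval /=; ring.
Qed.

Lemma rV2_neq0 (R : nmodType) (u : 'rV[R]_2) : u != 0 -> u 0 0 != 0 \/ u 0 1 != 0.
Proof.
move=> u_neq0; case: (eqVneq (u 0 0) 0) => [u0|]; last by left.
case: (eqVneq (u 0 1) 0) => [u1|]; last by right.
case/eqP: u_neq0; apply/matrixP => i [[|[|j]] lt_j2] //; rewrite ord1 mxE.
- by rewrite -u0; congr (u _ _); apply: val_inj.
- by rewrite -u1; congr (u _ _); apply: val_inj.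
Qed.


(* hornerE leaves sums in a shape that ring does not parse. *)
Definition horner_lin := (hornerD, hornerN, hornerM, hornerC, hornerX, hornerXn).

Section Homotopies.
Variable k : fieldType.

Lemma ev_pair_mkF2 (t : k) (a0 a1 b0 b1 : {poly k}) :
  ev_pair t (mkF2 a0 a1 b0 b1) = mkF2 a0.[t] a1.[t] b0.[t] b1.[t].
Proof.
congr (_, _); apply/polyP => i; rewrite coef_map_id0 ?horner0 // ?coef_quad ?coef_lin.
- by case: i => [|[|[|i]]] //=; rewrite ?hornerC.
- by case: i => [|[|i]] //=; rewrite ?hornerC.
Qed.

Lemma mkF2_naive_equiv (a0 a1 b0 b1 : {poly k}) (c : k) x y :
  c != 0 -> b0 ^+ 2 - a1 * b0 * b1 + a0 * b1 ^+ 2 = c%:P ->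
  x = mkF2 a0.[0] a1.[0] b0.[0] b1.[0] -> y = mkF2 a0.[1] a1.[1] b0.[1] b1.[1] ->
  naive_equiv x y.
Proof.
move=> c_neq0 res_c -> ->; apply: rst_step; exists (mkF2 a0 a1 b0 b1).
split; rewrite ?ev_pair_mkF2 //; apply: inF2_mkF2.
by rewrite res_c poly_unitE size_polyC c_neq0 coefC unitfE.
Qed.

(* Its Bezoutian is symmx2 p q s when sdet p q s != 0. *)
Definition bezrep (p q s : k) : {poly k} * {poly k} :=
  mkF2 (- p ^+ 2 / sdet p q s) (- (p * q) / sdet p q s) q s.

Lemma mkF2_bezrep (a0 a1 b0 b1 : k) : b0 ^+ 2 - a1 * b0 * b1 + a0 * b1 ^+ 2 != 0 ->
  naive_equiv (mkF2 a0 a1 b0 b1) (bezrep (a1 * b0 - a0 * b1) b0 b1).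
Proof.
set r := _ - _ + _ => r_neq0; set p := a1 * b0 - a0 * b1.
have dE : sdet p b0 b1 = - r by rewrite /sdet /p /r; ring.
set a0' := - p ^+ 2 / sdet p b0 b1; set a1' := - (p * b0) / sdet p b0 b1.
(* Moving (a0, a1) linearly to (a0', a1') keeps B fixed and the resultant
   constant, since a1' b0 - a0' b1 = a1 b0 - a0 b1. *)
have shift0 : (a1' - a1) * b0 - (a0' - a0) * b1 = 0.
  by rewrite /a1' /a0' dE /r /p; field; rewrite oppr_eq0.
apply: (@mkF2_naive_equiv (a0%:P + (a0' - a0)%:P * 'X) (a1%:P + (a1' - a1)%:P * 'X)
  b0%:P b1%:P r) => //.
- transitivity (r%:P - ((a1' - a1) * b0 - (a0' - a0) * b1)%:P * b1%:P * 'X).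
    by rewrite /r; ring.
  by rewrite shift0; ring.
- by congr mkF2; rewrite !horner_lin; ring.
- by rewrite /bezrep -/a0' -/a1'; congr mkF2; rewrite !horner_lin; ring.
Qed.

Lemma bezrep_path (P Q S : {poly k}) (d p0 q0 s0 p1 q1 s1 : k) :
  d != 0 -> P * S - Q ^+ 2 = d%:P ->
  P.[0] = p0 -> Q.[0] = q0 -> S.[0] = s0 ->
  P.[1] = p1 -> Q.[1] = q1 -> S.[1] = s1 ->
  naive_equiv (bezrep p0 q0 s0) (bezrep p1 q1 s1).
Proof.
move=> d_neq0 dE <- <- <- <- <- <-.
have sdetE t : sdet P.[t] Q.[t] S.[t] = d.
  by have := congr1 (horner^~ t) dE; rewrite /sdet /= !horner_lin.
apply: (@mkF2_naive_equiv (- P ^+ 2 * (d^-1)%:P) (- (P * Q) * (d^-1)%:P) Q S (- d)).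
- by rewrite oppr_eq0.
- have ddV : d%:P * (d^-1)%:P = 1 by rewrite -polyCM mulfV.
  transitivity (Q ^+ 2 - (P * S - Q ^+ 2) * (P * S) * (d^-1)%:P); first by ring.
  rewrite dE; transitivity (Q ^+ 2 - d%:P * (d^-1)%:P * (P * S)); first by ring.
  by rewrite ddV mul1r polyCN -dE; ring.
- by rewrite /bezrep sdetE !horner_lin.
- by rewrite /bezrep sdetE !horner_lin.
Qed.

Lemma bezrep_shear1 (p q s l : k) : sdet p q s != 0 ->
  naive_equiv (bezrep p q s) (bezrep (p + 2 * l * q + l ^+ 2 * s) (q + l * s) s).
Proof.
move=> d_neq0; apply: (@bezrep_path (p%:P + (2 * l * q)%:P * 'X + (l ^+ 2 * s)%:P * 'X ^+ 2)
  (q%:P + (l * s)%:P * 'X) s%:P (sdet p q s)) => //; rewrite ?horner_lin /sdet; ring.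
Qed.

Lemma bezrep_shear2 (p q s l : k) : sdet p q s != 0 ->
  naive_equiv (bezrep p q s) (bezrep p (q + l * p) (s + 2 * l * q + l ^+ 2 * p)).
Proof.
move=> d_neq0; apply: (@bezrep_path p%:P (q%:P + (l * p)%:P * 'X)
  (s%:P + (2 * l * q)%:P * 'X + (l ^+ 2 * p)%:P * 'X ^+ 2) (sdet p q s)) => //;
  rewrite ?horner_lin /sdet; ring.
Qed.

Lemma bezrep_change_s (q s s' : k) : q != 0 ->
  naive_equiv (bezrep 0 q s) (bezrep 0 q s').
Proof.
move=> q_neq0; apply: (@bezrep_path 0 q%:P (s%:P + (s' - s)%:P * 'X) (- q ^+ 2));
  rewrite ?oppr_eq0 ?expf_neq0 ?horner_lin //; ring.
Qed.

Lemma bezrep_change_p (p p' q : k) : q != 0 ->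
  naive_equiv (bezrep p q 0) (bezrep p' q 0).
Proof.
move=> q_neq0; apply: (@bezrep_path (p%:P + (p' - p)%:P * 'X) q%:P 0 (- q ^+ 2));
  rewrite ?oppr_eq0 ?expf_neq0 ?horner_lin //; ring.
Qed.

End Homotopies.

Section Values.
Variable k : fieldType.

Lemma naive_equiv_bezrep (p q s p' q' s' : k) : p = p' -> q = q' -> s = s' ->
  naive_equiv (bezrep p q s) (bezrep p' q' s').
Proof. by move=> -> -> ->; apply: rst_refl. Qed.

Lemma shear_decomposition (w1 w2 : k) : w1 != 0 \/ w2 != 0 ->
  exists l1 l m, w1 = 1 + l * m /\ w2 = l1 * (1 + l * m) + m.
Proof.
case: (eqVneq w1 0) => [-> [//|w2_neq0]|w1_neq0 _].
  by exists 0, (- w2^-1), w2; split; [field|ring].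
by exists ((w2 - 1) / w1), (w1 - 1), 1; split; [ring|field].
Qed.

Lemma bezrep_value (p q s w1 w2 : k) : sdet p q s != 0 -> w1 != 0 \/ w2 != 0 ->
  exists q' s', naive_equiv (bezrep p q s) (bezrep (qval p q s w1 w2) q' s')
             /\ sdet (qval p q s w1 w2) q' s' = sdet p q s.
Proof.
move=> d_neq0 /shear_decomposition [l1 [l [m [-> ->]]]].
set p1 := p + 2 * l1 * q + l1 ^+ 2 * s; set q1 := q + l1 * s.
set q2 := q1 + l * p1; set s2 := s + 2 * l * q1 + l ^+ 2 * p1.
have d1 : sdet p1 q1 s = sdet p q s by rewrite /sdet /p1 /q1; ring.
have d2 : sdet p1 q2 s2 = sdet p q s by rewrite -d1 /sdet /q2 /s2; ring.
exists (q2 + m * s2), s2; split; last by rewrite -d2 /sdet /qval /s2 /q2 /p1 /q1; ring.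
apply: rst_trans (bezrep_shear1 l1 d_neq0) _.
apply: rst_trans (bezrep_shear2 l _) _; first by rewrite d1.
apply: rst_trans (bezrep_shear1 m _) _; first by rewrite d2.
by apply: naive_equiv_bezrep => //; rewrite /qval /s2 /q2 /p1 /q1; ring.
Qed.

Lemma qval_neq0 (p q s w1 w2 : k) : qval p q s w1 w2 != 0 -> w1 != 0 \/ w2 != 0.
Proof.
move=> w_aniso; case: (eqVneq w1 0) => [w1_0|]; [right | by left].
by apply: contraNneq w_aniso => ->; rewrite w1_0 /qval; apply/eqP; ring.
Qed.

Lemma bezrep_anisotropic (p q s w1 w2 : k) :
  sdet p q s != 0 -> qval p q s w1 w2 != 0 ->
  naive_equiv (bezrep p q s)
    (bezrep (qval p q s w1 w2) 0 (sdet p q s / qval p q s w1 w2)).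
Proof.
move=> d_neq0 a_neq0.
have [q' [s' [hq' dE]]] := bezrep_value d_neq0 (qval_neq0 a_neq0).
set a := qval _ _ _ _ _ in a_neq0 hq' dE *.
apply: rst_trans hq' _; apply: rst_trans (bezrep_shear2 (- (q' / a)) _) _; first by rewrite dE.
by apply: naive_equiv_bezrep => //; rewrite -?dE /sdet; field.
Qed.

Lemma bezrep_isotropic (p q s w1 w2 a : k) :
  sdet p q s != 0 -> w1 != 0 \/ w2 != 0 -> qval p q s w1 w2 = 0 -> a != 0 ->
  naive_equiv (bezrep p q s) (bezrep a 0 (sdet p q s / a)).
Proof.
move=> d_neq0 w_neq0 w_iso a_neq0.
have [q' [s' []]] := bezrep_value d_neq0 w_neq0; rewrite w_iso => hq' dE.
have dE' : sdet p q s = - q' ^+ 2 by rewrite -dE /sdet; ring.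
have q'_neq0 : q' != 0 by apply: contraNneq d_neq0 => q'0; rewrite dE' q'0 expr0n oppr0.
apply: rst_trans hq' _; apply: rst_trans (bezrep_change_s s' 0 q'_neq0) _.
apply: rst_trans (bezrep_change_p 0 a q'_neq0) _.
apply: rst_trans (bezrep_shear2 (- (q' / a)) _) _.
  by rewrite /sdet mulr0 sub0r oppr_eq0 expf_neq0.
by apply: naive_equiv_bezrep => //; rewrite ?dE'; field.
Qed.

Lemma bezrep_diag (p q s : k) : sdet p q s != 0 ->
  exists2 a, a != 0 & naive_equiv (bezrep p q s) (bezrep a 0 (sdet p q s / a)).
Proof.
move=> d_neq0; have e1_neq0 : (1 : k) != 0 \/ (0 : k) != 0 by left; exact: oner_neq0.
case: (eqVneq (qval p q s 1 0) 0) => [iso|aniso].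
  by exists 1; [exact: oner_neq0 | exact: bezrep_isotropic e1_neq0 iso (oner_neq0 k)].
by exists (qval p q s 1 0) => //; exact: bezrep_anisotropic.
Qed.

Lemma bezrep_common_value (p q s p' q' s' : k) (u v : 'rV[k]_2) :
  sdet p q s != 0 -> sdet p q s = sdet p' q' s' -> u != 0 \/ v != 0 ->
  u *m symmx2 p q s *m u^T = v *m symmx2 p' q' s' *m v^T ->
  naive_equiv (bezrep p q s) (bezrep p' q' s').
Proof.
move=> d_neq0 dE uv /(congr1 (fun A : 'M_1 => A 0 0)); rewrite /= !form_symmx2 => uvE.
have d'_neq0 : sdet p' q' s' != 0 by rewrite -dE.
case: (eqVneq (qval p q s (u 0 0) (u 0 1)) 0) => [iso|aniso].
- case: uv => [/rV2_neq0 u_neq0|/rV2_neq0 v_neq0].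
  + have [a a_neq0 hy] := bezrep_diag d'_neq0.
    apply: rst_trans (bezrep_isotropic d_neq0 u_neq0 iso a_neq0) _.
    by rewrite dE; apply: rst_sym.
  + have [a a_neq0 hx] := bezrep_diag d_neq0.
    apply: rst_trans hx _; apply: rst_sym; rewrite dE.
    by apply: (bezrep_isotropic d'_neq0 v_neq0 _ a_neq0); rewrite -uvE.
- apply: rst_trans (bezrep_anisotropic d_neq0 aniso) _.
  rewrite uvE dE; apply: rst_sym; apply: bezrep_anisotropic d'_neq0 _.
  by rewrite -uvE.
Qed.

End Values.

Section StableCancellation.
Variables (k : fieldType) (p m : nat).
Variables (M N : 'M[k]_p) (G : 'M[k]_m) (R : 'M[k]_(p + m)).
Hypotheses (p_gt0 : (0 < p)%N) (G_unit : G \in unitmx).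
Hypothesis congR : R *m block_mx M 0 0 G *m R^T = block_mx N 0 0 G.

Local Notation F := (rsubmx (R - 1%:M)).

Lemma form_block_diag (A : 'M[k]_p) (r : nat) (w : 'M[k]_(r, p + m)) :
  w *m block_mx A 0 0 G *m w^T =
  lsubmx w *m A *m (lsubmx w)^T + rsubmx w *m G *m (rsubmx w)^T.
Proof.
by rewrite -[in LHS](hsubmxK w) mul_row_block !mulmx0 addr0 add0r tr_row_mx mul_row_col.
Qed.

Lemma rsub_fixed (r : nat) (w : 'M[k]_(r, p + m)) :
  w *m F = 0 -> rsubmx (w *m R) = rsubmx w.
Proof.
rewrite mulmx_rsub mulmxBr mulmx1 => /matrixP h.
by apply/matrixP => i j; have := h i j; rewrite !mxE => /eqP; rewrite subr_eq0 => /eqP.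
Qed.

(* K X is fixed by R^T, so F kills the transpose of its G-part rsubmx K *m G,
   which has the rank of K. *)
Lemma rank_fixed_le (r : nat) (K : 'M[k]_(r, p + m)) :
  lsubmx K = 0 -> K *m R = K -> (\rank K + \rank F <= m)%N.
Proof.
move=> lK KR.
have eK : K = row_mx 0 (rsubmx K) by rewrite -{1}(hsubmxK K) lK.
have KX (A : 'M[k]_p) : K *m block_mx A 0 0 G = row_mx 0 (rsubmx K *m G).
  by rewrite {1}eK mul_row_block !mulmx0 !mul0mx !add0r.
set W := (rsubmx K *m G)^T.
have RW : R *m col_mx 0 W = col_mx 0 W.
  apply: trmx_inj; rewrite trmx_mul tr_col_mx trmx0 trmxK -(KX M).
  by rewrite -{1}KR -!mulmxA (mulmxA R) congR !KX.
have FW : F *m W = 0.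
  have : (R - 1%:M) *m col_mx 0 W = 0 by rewrite mulmxBl mul1mx RW subrr.
  by rewrite -{1}(hsubmxK (R - 1%:M)) mul_row_col mulmx0 add0r.
have rW : \rank W = \rank K.
  by rewrite mxrank_tr mxrankMfree ?row_free_unit // {2}eK rank_row_0mx.
have /mxrankS : (F <= kermx W)%MS by apply/sub_kermxP.
rewrite mxrank_ker rW.
have := rank_leq_row W; rewrite rW; lia.
Qed.

Lemma stable_common_value :
  exists u v : 'rV[k]_p, (u != 0 \/ v != 0) /\ u *m M *m u^T = v *m N *m v^T.
Proof.
set K := kermx F.
have KF : K *m F = 0 := mulmx_ker F.
case: (boolP [exists i, (lsubmx (row i K *m R) != 0) || (lsubmx (row i K) != 0)]).
  case/existsP => i /orP uv; set w := row i K.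
  have wF : w *m F = 0 by rewrite -row_mul KF row0.
  exists (lsubmx (w *m R)), (lsubmx w); split=> //.
  have : w *m R *m block_mx M 0 0 G *m (w *m R)^T = w *m block_mx N 0 0 G *m w^T.
    by rewrite trmx_mul -congR !mulmxA.
  rewrite !form_block_diag rsub_fixed //.
  exact: addIr.
rewrite negb_exists => /forallP fixK; exfalso.
have lK0 : lsubmx K = 0.
  apply/matrixP => i j; have /norP [_ /negPn/eqP/matrixP/(_ 0 j)] := fixK i.
  by rewrite !mxE.
have KR : K *m R = K.
  rewrite -[RHS]hsubmxK lK0 -(rsub_fixed KF) -[LHS]hsubmxK; congr row_mx.
  apply/matrixP => i j; have /norP [/negPn/eqP/matrixP/(_ 0 j) + _] := fixK i.
  by rewrite -row_mul !mxE.
have := rank_fixed_le lK0 KR; rewrite mxrank_ker.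
have := rank_leq_col F; lia.
Qed.
End StableCancellation.

Lemma inF2_bezrep (k : fieldType) (x : {poly k} * {poly k}) : inF2 x ->
  exists p q s,
    [/\ Bez2 x = symmx2 p q s, sdet p q s != 0 & naive_equiv x (bezrep p q s)].
Proof.
move=> xF2; have [a0 [a1 [b0 [b1 xE]]]] := inF2_mkF2E xF2; subst x.
case: xF2 => _ _ _; rewrite res22_mkF2 unitfE => res_neq0.
exists (a1 * b0 - a0 * b1), b0, b1; split.
- exact: Bez2_mkF2.
- by apply: contraNneq res_neq0 => d0; apply/eqP; rewrite -[RHS]oppr0 -d0 /sdet; ring.
- exact: mkF2_bezrep.
Qed.

Unset Implicit Arguments.

Theorem corollary3p20 (k : fieldType) (x y : {poly k} * {poly k}) :
  inF2 x -> inF2 y ->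
  stably_iso (Bez2 x) (Bez2 y) ->
  \det (Bez2 x) = \det (Bez2 y) ->
  naive_equiv x y.
Proof.
move=> xF2 yF2 [m [G [_ G_unit [P [_ congP]]]]] detE.
have [px [qx [sx [Bx dx_neq0 x_equiv]]]] := inF2_bezrep xF2.
have [py [qy [sy [By _ y_equiv]]]] := inF2_bezrep yF2.
rewrite Bx By !det_symmx2 in congP detE.
have congPT : P^T *m block_mx (symmx2 px qx sx) 0 0 G *m P^T^T =
              block_mx (symmx2 py qy sy) 0 0 G by rewrite trmxK.
have [u [v [uv uvE]]] := stable_common_value (isT : (0 < 2)%N) G_unit congPT.
apply: rst_trans x_equiv _; apply: rst_trans (bezrep_common_value dx_neq0 detE uv uvE) _.
exact: rst_sym.
Qed.
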